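(* Suppose the joint density of the type satisfies $g(v,k)=g_v(v)g_k(k)$ for all $(v,k)$, and let $p^*$ be any maximizer of $p\,(1-G_v(p))$ over $p\in[0,1]$. Then the mechanism $(f,p)$ with $(f(v,k),p(v,k))=(k,1,p^* )$ if $v\ge p^*$ and $(f(v,k),p(v,k))=(0,0,0)$ otherwise is optimal, i.e., it is incentive compatible and individually rational and its expected revenue $\int_{V\times K}p\,dG$ is at least that of every other incentive compatible and individually rational mechanism.
   Context: A seller has one unit each of two divisible goods. An agent has private type $(v,k)\in V\times K$, $V=[0,1]$, $K=(0,1]$, and from an outcome $(a_1,a_2,t)$ with $a_1,a_2\in[0,1]$ (quantities of good 1 and good 2) and $t\in\mathbb{R}$ (payment by the agent) gets utility $U_{(v,k)}(a_1,a_2,t)=v\min\{a_1/k,a_2\}-t$. A mechanism is a pair $(f,p)$ with $f=(f_1,f_2):V\times K\to[0,1]^2$, $p:V\times K\to\mathbb{R}$. It is incentive compatible if $U_{(v,k)}(f(v,k),p(v,k))\ge U_{(v,k)}(f(v',k'),p(v',k'))$ for all types $(v,k),(v',k')$, and individually rational if $U_{(v,k)}(f(v,k),p(v,k))\ge0$ for all $(v,k)$. The type is distributed according to a joint distribution $G$ with strictly positive density $g$; $g_v,g_k$ are the marginal densities of $v$ and $k$, and $G_v$ is the marginal distribution function of $v$. *)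

From HB Require Import structures.
From mathcomp Require Import all_boot all_order all_algebra.
From mathcomp Require Import all_classical all_reals all_analysis.
Set Implicit Arguments. Unset Strict Implicit. Unset Printing Implicit Defensive.
Import Order.TTheory GRing.Theory Num.Theory.
Local Open Scope classical_set_scope.
Local Open Scope ring_scope.

Section Screening.
Variable R : realType.

Definition Vset : set R := `[0, 1]%classic.
Definition Kset : set R := `]0, 1]%classic.
Definition TS : set (R * R) := Vset `*` Kset.

Definition lebR := @lebesgue_measure R.

Definition utility (v k a1 a2 t : R) : R := v * Num.min (a1 / k) a2 - t.

Definition feasible (f1 f2 : R -> R -> R) : Prop :=
  forall v k, v \in Vset -> k \in Kset ->
    (0 <= f1 v k <= 1) /\ (0 <= f2 v k <= 1).

Definition IC (f1 f2 p : R -> R -> R) : Prop :=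
  forall v k v' k', v \in Vset -> k \in Kset -> v' \in Vset -> k' \in Kset ->
    utility v k (f1 v' k') (f2 v' k') (p v' k') <=
    utility v k (f1 v k) (f2 v k) (p v k).

Definition IR (f1 f2 p : R -> R -> R) : Prop :=
  forall v k, v \in Vset -> k \in Kset -> 0 <= utility v k (f1 v k) (f2 v k) (p v k).

Definition is_pos_density (g : R -> R -> R) : Prop :=
  [/\ measurable_fun TS (fun x : R * R => g x.1 x.2),
      (forall v k, v \in Vset -> k \in Kset -> 0 < g v k) &
      (\int[(lebR \x lebR)%E]_(x in TS) (g x.1 x.2)%:E = 1)%E].

Definition gv (g : R -> R -> R) (v : R) : R := Rintegral lebR Kset (fun k => g v k).
Definition gk (g : R -> R -> R) (k : R) : R := Rintegral lebR Vset (fun v => g v k).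
Definition Gv (g : R -> R -> R) (x : R) : R :=
  Rintegral lebR (Vset `&` `]-oo, x]%classic) (gv g).

Definition revenue (g p : R -> R -> R) : \bar R :=
  (\int[(lebR \x lebR)%E]_(x in TS) (p x.1 x.2 * g x.1 x.2)%:E)%E.

Definition f1_star (ps : R) (v k : R) : R := if ps <= v then k else 0.
Definition f2_star (ps : R) (v k : R) : R := if ps <= v then 1 else 0.
Definition p_star (ps : R) (v k : R) : R := if ps <= v then ps else 0.

End Screening.
Arguments Vset {R}.
Arguments Kset {R}.
Arguments TS {R}.

(* Fix the reported efficiency parameter k.  Among reports with this k, an
   incentive compatible and individually rational mechanism is a screening
   mechanism for the value v alone, with effective quantity
   q v = min (f1 v k / k) (f2 v k) in [0,1], nondecreasing by IC.  On the grid
   l/n, IC bounds the payment of v by the prices (l+1)/n weighted by the jumps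
   of q below v: up to 1/n the mechanism is a lottery over posted prices, and a
   posted price w earns w (1 - Gv w) <= ps (1 - Gv ps).  Since g factorises,
   the distribution of v is the same for every k, so integrating over k
   (Fubini) bounds the revenue by ps (1 - Gv ps), which posting ps attains. *)

From HB Require Import structures.
From mathcomp Require Import all_boot all_order all_algebra.
From mathcomp Require Import all_classical all_reals all_analysis.
From mathcomp Require Import lra ring measurable_realfun.
Set Implicit Arguments. Unset Strict Implicit. Unset Printing Implicit Defensive.
Import Order.TTheory GRing.Theory Num.Theory.
Local Open Scope classical_set_scope.
Local Open Scope ring_scope.

Lemma in_Vset (R : realType) (v : R) : (v \in Vset) = (0 <= v <= 1).
Proof. by rewrite mem_setE in_itv. Qed.

Lemma in_Kset (R : realType) (k : R) : (k \in Kset) = (0 < k <= 1).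
Proof. by rewrite mem_setE in_itv. Qed.

Lemma Vset0 (R : realType) : (0 : R) \in Vset.
Proof. by rewrite in_Vset lexx ler01. Qed.

Lemma Vset1 (R : realType) : (1 : R) \in Vset.
Proof. by rewrite in_Vset lexx ler01. Qed.

Lemma Kset1 (R : realType) : (1 : R) \in Kset.
Proof. by rewrite in_Kset lexx ltr01. Qed.

Definition grid (R : realType) (n l : nat) : R := l%:R / n%:R.

Section Grid.
Variables (R : realType) (n : nat).
Local Notation grid := (grid R n).

Lemma grid0 : grid 0 = 0.
Proof. by rewrite /grid mul0r. Qed.

Lemma gridS l : grid l.+1 = grid l + n%:R^-1.
Proof. by rewrite /grid -natr1 mulrDl mul1r. Qed.

Lemma grid_ge0 l : 0 <= grid l.
Proof. by rewrite /grid divr_ge0. Qed.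

Lemma grid_le i j : (i <= j)%N -> grid i <= grid j.
Proof. by move=> ij; rewrite /grid ler_wpM2r ?invr_ge0 ?ler_nat. Qed.

Lemma grid_cell (v : R) m : 0 < v <= grid m ->
  exists2 i, (i < m)%N & grid i < v <= grid i.+1.
Proof.
case/andP=> v_gt0; elim: m => [|m IHm] vm; first by move: vm; rewrite grid0 leNgt v_gt0.
have [/IHm[i im vi]|ltv] := leP v (grid m); first by exists i => //; exact: ltnW.
by exists m; rewrite // ltv.
Qed.

Hypothesis n_gt0 : (0 < n)%N.

Lemma gridn : grid n = 1.
Proof. by rewrite /grid divff // pnatr_eq0 -lt0n. Qed.

Lemma grid_Vset l : (l <= n)%N -> grid l \in Vset.
Proof. by move=> ln; rewrite in_Vset grid_ge0 -gridn grid_le. Qed.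

End Grid.

Section OneDimensionalScreening.
Variables (R : realType) (q P : R -> R).
Hypothesis ic : forall v w, v \in Vset -> w \in Vset -> v * q w - P w <= v * q v - P v.

Lemma ic_alloc_nondecr : {in Vset &, {homo q : w v / w <= v}}.
Proof.
move=> w v Vw Vv; rewrite le_eqVlt => /predU1P[-> //|wv].
have := ic Vv Vw; have := ic Vw Vv => ic_vw ic_wv.
have : 0 <= (v - w) * (q v - q w) by nra.
by rewrite pmulr_rge0 ?subr_gt0 // subr_ge0.
Qed.

Lemma ic_payment_step a b v : a \in Vset -> b \in Vset -> v \in Vset ->
  a < v <= b -> P v <= P a + b * (q b - q a).
Proof.
move=> Va Vb Vv /andP[av vb].
have := ic Vv Va.
have := ic_alloc_nondecr Va Vv (ltW av); have := ic_alloc_nondecr Vv Vb vb.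
by move: Vv; rewrite in_Vset => /andP[v_ge0 _]; nra.
Qed.

Variable n : nat.
Hypothesis n_gt0 : (0 < n)%N.
Local Notation grid := (grid R n).

Definition step_revenue l := grid l.+1 * (q (grid l.+1) - q (grid l)).

Lemma step_revenue_ge0 l : (l < n)%N -> 0 <= step_revenue l.
Proof.
move=> ln; rewrite mulr_ge0 ?grid_ge0 // subr_ge0.
by apply: ic_alloc_nondecr; rewrite ?grid_Vset ?grid_le // ltnW.
Qed.

Hypothesis P0_le0 : P 0 <= 0.

Lemma payment_grid_le j : (j <= n)%N ->
  P (grid j) <= \sum_(0 <= l < j) step_revenue l.
Proof.
elim: j => [_|j IHj jn]; first by rewrite grid0 big_geq.
have lt_grid : grid j < grid j.+1 by rewrite gridS ltrDl invr_gt0 ltr0n.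
rewrite big_nat_recr //=.
apply: le_trans (@ic_payment_step (grid j) (grid j.+1) (grid j.+1) _ _ _ _) _;
  rewrite ?grid_Vset ?lt_grid ?lexx ?lerD2r ?IHj //; exact: ltnW.
Qed.

Lemma payment_le_step_sum v : v \in Vset ->
  Num.max (P v) 0 <= \sum_(0 <= l < n) (if grid l < v then step_revenue l else 0).
Proof.
move=> Vv; have sum_ge0 : 0 <= \sum_(0 <= l < n)
    (if grid l < v then step_revenue l else 0).
  rewrite big_nat; apply: sumr_ge0 => l /andP[_ ln].
  by case: ifP => // _; exact: step_revenue_ge0.
rewrite ge_max sum_ge0 andbT.
have := Vv; rewrite in_Vset => /andP[v_ge0 v_le1].
have [v_le0|v_gt0] := leP v 0.
  apply: le_trans _ sum_ge0.
  by have -> : v = 0 by apply/eqP; rewrite eq_le v_le0 v_ge0.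
have vn : 0 < v <= grid n by rewrite v_gt0 (gridn R n_gt0).
have [i ilt /andP[iv vi]] := grid_cell vn.
apply: le_trans (@ic_payment_step (grid i) (grid i.+1) v _ _ Vv _) _;
  rewrite ?grid_Vset ?iv ?vi //; first exact: ltnW.
apply: le_trans (_ : \sum_(0 <= l < i.+1) step_revenue l <= _).
  by rewrite big_nat_recr //= lerD2r payment_grid_le // ltnW.
rewrite (big_nat_widen _ _ _ _ _ ilt) big_mkcond /= !big_nat.
apply: ler_sum => l /andP[_ ln]; case: ifP => li.
  by rewrite ifT //; apply: le_lt_trans iv; apply: grid_le; rewrite -ltnS.
by case: ifP => // _; exact: step_revenue_ge0.
Qed.

Lemma step_sum_le (A : nat -> R) (Rs : R) :
  0 <= q 0 -> q 1 <= 1 -> 0 <= Rs ->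
  (forall l, (l < n)%N -> 0 <= A l <= 1) ->
  (forall l, (l < n)%N -> grid l * A l <= Rs) ->
  \sum_(0 <= l < n) step_revenue l * A l <= Rs + n%:R^-1.
Proof.
move=> q0_ge0 q1_le1 Rs_ge0 A01 gridA_le.
have inv_ge0 : 0 <= n%:R^-1 :> R by rewrite invr_ge0.
pose dq l := q (grid l.+1) - q (grid l).
have dq_ge0 l : (l < n)%N -> 0 <= dq l.
  move=> ln; rewrite subr_ge0; apply: ic_alloc_nondecr; rewrite ?grid_Vset ?grid_le //.
  exact: ltnW.
apply: le_trans (_ : \sum_(0 <= l < n) (Rs + n%:R^-1) * dq l <= _).
  rewrite !big_nat; apply: ler_sum => l /andP[_ ln].
  have /andP[A_ge0 A_le1] := A01 l ln; have := gridA_le l ln.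
  rewrite /step_revenue -/(dq l) -mulrA [dq l * _]mulrC mulrA gridS => gA.
  by rewrite ler_wpM2r ?dq_ge0 // mulrDl lerD // ler_piMr.
rewrite -mulr_sumr telescope_sumr // grid0 (gridn R n_gt0).
apply: ler_piMr; first exact: addr_ge0.
by rewrite lerBlDr (le_trans q1_le1) // lerDl.
Qed.

End OneDimensionalScreening.

Section ProductSections.
Context d1 d2 d3 (T1 : measurableType d1) (T2 : measurableType d2)
  (T3 : measurableType d3) (D1 : set T1) (D2 : set T2) (F : T1 * T2 -> T3).
Hypotheses (mD1 : measurable D1) (mD2 : measurable D2)
  (mF : measurable_fun (D1 `*` D2) F).

Lemma measurable_fun_sectionl y : D2 y -> measurable_fun D1 (fun x => F (x, y)).
Proof.
move=> D2y; apply: (measurable_comp (F := D1 `*` D2)) => //.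
- exact: measurableX.
- by move=> _ [x D1x <-].
- exact/measurable_funTS/pair2_measurable.
Qed.

Lemma measurable_fun_sectionr x : D1 x -> measurable_fun D2 (fun y => F (x, y)).
Proof.
move=> D1x; apply: (measurable_comp (F := D1 `*` D2)) => //.
- exact: measurableX.
- by move=> _ [y D2y <-].
- exact/measurable_funTS/pair1_measurable.
Qed.

End ProductSections.

Lemma measurable_Vset (R : realType) : measurable (@Vset R).
Proof. exact: measurable_itv. Qed.

Lemma measurable_Kset (R : realType) : measurable (@Kset R).
Proof. exact: measurable_itv. Qed.

Lemma measurable_TS (R : realType) : measurable (@TS R).
Proof. by apply: measurableX; [exact: measurable_Vset | exact: measurable_Kset]. Qed.

Lemma measurable_fun_TS_slice (R : realType) (F : R -> R -> R) k :
  measurable_fun TS (fun z : R * R => F z.1 z.2) -> k \in Kset ->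
  measurable_fun Vset (fun v => F v k).
Proof.
move=> mF /set_mem Kk.
exact: (measurable_fun_sectionl (@measurable_Vset R) (@measurable_Kset R) mF Kk).
Qed.

Lemma Rintegral_eq1_of_scale d (T : measurableType d) (R : realType)
    (mu : {measure set T -> \bar R}) (D : set T) (f : T -> R) (c : R) :
  measurable D -> 0 < c -> (forall x, D x -> 0 <= f x) -> measurable_fun D f ->
  c = Rintegral mu D (fun x => c * f x) -> (\int[mu]_(x in D) (f x)%:E = 1)%E.
Proof.
move=> mD c_gt0 f_ge0 mf; rewrite /Rintegral.
under eq_integral do rewrite EFinM.
rewrite ge0_integralZl_EFin //; [|exact/measurable_EFinP|exact: ltW].
case: (\int[mu]_(x in D) (f x)%:E)%E => [r||] /=; last 2 first.
- by rewrite gt0_muley ?lte_fin //= => c0; rewrite c0 ltxx in c_gt0.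
- by rewrite gt0_muleNy ?lte_fin //= => c0; rewrite c0 ltxx in c_gt0.
by rewrite -[X in X = _ -> _]mulr1 => /mulfI -> //; rewrite gt_eqF.
Qed.

Section ProductDensity.
Variables (R : realType) (g : R -> R -> R).
Hypothesis g_density : is_pos_density g.

Lemma gv_ge0 v : Vset v -> 0 <= gv g v.
Proof.
case: g_density => _ g_gt0 _ Vv; apply: Rintegral_ge0 => k Kk.
by apply/ltW/g_gt0; exact: mem_set.
Qed.

Lemma gk_ge0 k : Kset k -> 0 <= gk g k.
Proof.
case: g_density => _ g_gt0 _ Kk; apply: Rintegral_ge0 => v Vv.
by apply/ltW/g_gt0; exact: mem_set.
Qed.

Hypothesis g_prod : forall v k, v \in Vset -> k \in Kset -> g v k = gv g v * gk g k.

Lemma gv_gt0 v : v \in Vset -> 0 < gv g v.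
Proof.
case: g_density => _ g_gt0 _ Vv.
have := g_gt0 v 1 Vv (Kset1 R); rewrite g_prod ?Kset1 //.
have := gv_ge0 (set_mem Vv); have := gk_ge0 (set_mem (Kset1 R)); nra.
Qed.

Lemma gk_gt0 k : k \in Kset -> 0 < gk g k.
Proof.
case: g_density => _ g_gt0 _ Kk.
have := g_gt0 0 k (Vset0 R) Kk; rewrite g_prod ?Vset0 //.
have := gv_ge0 (set_mem (Vset0 R)); have := gk_ge0 (set_mem Kk); nra.
Qed.

Lemma measurable_gv : measurable_fun Vset (gv g).
Proof.
case: g_density => mg _ _.
apply: (eq_measurable_fun (fun v => g v 1 / gk g 1)).
  by move=> v Vv; rewrite g_prod ?Kset1 ?mulfK ?gt_eqF ?gk_gt0 ?Kset1.
apply: measurable_funM; last exact: measurable_cst.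
exact: (measurable_fun_TS_slice mg (Kset1 R)).
Qed.

Lemma measurable_gk : measurable_fun Kset (gk g).
Proof.
case: g_density => mg _ _.
apply: (eq_measurable_fun (fun k => (gv g 0)^-1 * g 0 k)).
  by move=> k Kk; rewrite g_prod ?Vset0 ?mulKf ?gt_eqF ?gv_gt0 ?Vset0.
apply: measurable_funM; first exact: measurable_cst.
apply: (measurable_fun_sectionr (@measurable_Vset R) (@measurable_Kset R) mg).
exact/set_mem/Vset0.
Qed.

(* Factorisation alone normalises the marginals: gv 0 = gv 0 * \int gk. *)
Lemma integral_gk : (\int[@lebR R]_(k in Kset) (gk g k)%:E = 1)%E.
Proof.
apply: (Rintegral_eq1_of_scale (c := gv g 0)).
- exact: measurable_Kset.
- exact/gv_gt0/Vset0.
- exact: gk_ge0.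
- exact: measurable_gk.
- rewrite {1}/gv /Rintegral; congr fine; apply: eq_integral => k Kk.
  by rewrite g_prod ?Vset0.
Qed.

Lemma integral_gv : (\int[@lebR R]_(v in Vset) (gv g v)%:E = 1)%E.
Proof.
apply: (Rintegral_eq1_of_scale (c := gk g 1)).
- exact: measurable_Vset.
- exact/gk_gt0/Kset1.
- exact: gv_ge0.
- exact: measurable_gv.
- rewrite {1}/gk /Rintegral; congr fine; apply: eq_integral => v Vv.
  by rewrite g_prod ?Kset1 // mulrC.
Qed.

Lemma integral_tail_gv w :
  (\int[@lebR R]_(v in Vset `&` `]w, +oo[) (gv g v)%:E = (1 - Gv g w)%:E)%E.
Proof.
set A : set R := `]-oo, w]%classic.
have tailE : `]w, +oo[%classic = ~` A by rewrite setCitvl.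
have mA : measurable (Vset `&` A).
  by apply: measurableI; [exact: measurable_Vset | exact: measurable_itv].
have mB : measurable (Vset `&` ~` A).
  by rewrite -tailE; apply: measurableI; [exact: measurable_Vset | exact: measurable_itv].
have int_ge0 B : (0 <= \int[@lebR R]_(v in Vset `&` B) (gv g v)%:E)%E.
  by apply: integral_ge0 => v [Vv _]; rewrite lee_fin; exact: gv_ge0.
have VE : Vset = (Vset `&` A) `|` (Vset `&` ~` A) by rewrite -setIUr setUCr setIT.
move: integral_gv; rewrite {1}VE ge0_integral_setU -?VE //; first last.
- by apply/disj_setPS; rewrite setIACA setICr setI0.
- by move=> v Vv; rewrite lee_fin; exact: gv_ge0.
- by apply/measurable_EFinP; exact: measurable_gv.
rewrite tailE /Gv /Rintegral.
move: (int_ge0 A) (int_ge0 (~` A)).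
case: (\int[@lebR R]_(v in Vset `&` A) (gv g v)%:E)%E => [r||] //;
  case: (\int[@lebR R]_(v in Vset `&` ~` A) (gv g v)%:E)%E => [s||] //=.
by move=> _ _ [<-]; congr EFin; ring.
Qed.

Lemma integral_gk_scale c : 0 <= c ->
  (\int[@lebR R]_(k in Kset) ((gk g k)%:E * c%:E) = c%:E)%E.
Proof.
move=> c_ge0; under eq_integral do rewrite muleC.
rewrite ge0_integralZl_EFin ?integral_gk ?mule1 //.
- exact: measurable_Kset.
- by move=> k Kk; rewrite lee_fin; exact: gk_ge0.
- by apply/measurable_EFinP; exact: measurable_gk.
Qed.

Definition expect_given_k (h : R -> R -> R) k :=
  (\int[@lebR R]_(v in Vset) (h v k * gv g v)%:E)%E.

Section Fubini.
Variable h : R -> R -> R.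
Hypotheses (mh : measurable_fun TS (fun z : R * R => h z.1 z.2))
  (h_ge0 : forall v k, Vset v -> Kset k -> 0 <= h v k).

Let F := (fun z : R * R => (h z.1 z.2 * g z.1 z.2)%:E) \_ TS.

Let measurable_F : measurable_fun setT F.
Proof.
case: g_density => mg _ _.
by apply/(measurable_restrictT _ (@measurable_TS R))/measurable_EFinP/measurable_funM.
Qed.

Let F_ge0 z : (0 <= F z)%E.
Proof.
case: g_density => _ g_gt0 _.
rewrite /F patchE; case: ifP => // /set_mem[Vv Kk].
by rewrite lee_fin mulr_ge0 ?h_ge0 // ltW // g_gt0 //; exact: mem_set.
Qed.

Let fubini_G_F :
  fubini_G (@lebR R) F = (fun k => (gk g k)%:E * expect_given_k h k)%E \_ Kset.
Proof.
apply/funext => k; rewrite /fubini_G patchE; case: ifPn => Kk; last first.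
  apply: integral0_eq => v _; rewrite /F patchE ifF //.
  by apply/negbTE; apply: contra Kk => /set_mem[_ Kk]; exact: mem_set.
rewrite -ge0_integralZl_EFin; first last.
- exact: gk_ge0 (set_mem Kk).
- apply/measurable_EFinP/measurable_funM; last exact: measurable_gv.
  exact: (measurable_fun_TS_slice mh Kk).
- by move=> v Vv; rewrite lee_fin mulr_ge0 ?h_ge0 ?gv_ge0 //; exact: set_mem.
- exact: measurable_Vset.
rewrite [RHS]integral_mkcond; apply: eq_integral => v _; rewrite /F !patchE /=.
case: (boolP (v \in Vset)) => Vv; last first.
  by rewrite ifF //; apply/negbTE; apply: contra Vv => /set_mem[Vv _]; exact: mem_set.
rewrite ifT; last by apply/mem_set; split; exact: set_mem.
by rewrite g_prod // -EFinM; congr EFin; ring.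
Qed.

Lemma integral_TS_factor :
  (\int[(@lebR R \x @lebR R)%E]_(z in TS) (h z.1 z.2 * g z.1 z.2)%:E =
   \int[@lebR R]_(k in Kset) ((gk g k)%:E * expect_given_k h k))%E.
Proof.
rewrite integral_mkcond [RHS]integral_mkcond -fubini_G_F; exact: fubini_tonelli2.
Qed.

Let measurable_weighted_expect :
  measurable_fun Kset (fun k => (gk g k)%:E * expect_given_k h k)%E.
Proof.
apply/(measurable_restrictT _ (@measurable_Kset R)); rewrite -fubini_G_F.
exact: measurable_fun_fubini_tonelli_G.
Qed.

Let measurable_gk_scale c : measurable_fun Kset (fun k => (gk g k)%:E * c%:E)%E.
Proof. by apply/measurable_EFinP/measurable_funM => //; exact: measurable_gk. Qed.

Lemma integral_TS_le c : 0 <= c ->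
  (forall k, k \in Kset -> (expect_given_k h k <= c%:E)%E) ->
  (\int[(@lebR R \x @lebR R)%E]_(z in TS) (h z.1 z.2 * g z.1 z.2)%:E <= c%:E)%E.
Proof.
move=> c_ge0 E_le; rewrite integral_TS_factor -(integral_gk_scale c_ge0).
apply: ge0_le_integral.
- exact: measurable_Kset.
- move=> k Kk; rewrite mule_ge0 ?lee_fin ?gk_ge0 //.
  by apply: integral_ge0 => v Vv; rewrite lee_fin mulr_ge0 ?h_ge0 ?gv_ge0.
- exact: measurable_weighted_expect.
- exact: measurable_gk_scale.
- move=> k Kk; apply: lee_wpmul2l; first by rewrite lee_fin gk_ge0.
  by apply: E_le; exact: mem_set.
Qed.

Lemma integral_TS_ge c : 0 <= c ->
  (forall k, k \in Kset -> (c%:E <= expect_given_k h k)%E) ->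
  (c%:E <= \int[(@lebR R \x @lebR R)%E]_(z in TS) (h z.1 z.2 * g z.1 z.2)%:E)%E.
Proof.
move=> c_ge0 E_ge; rewrite integral_TS_factor -(integral_gk_scale c_ge0).
apply: ge0_le_integral.
- exact: measurable_Kset.
- by move=> k Kk; rewrite mule_ge0 ?lee_fin ?gk_ge0.
- exact: measurable_gk_scale.
- exact: measurable_weighted_expect.
- move=> k Kk; apply: lee_wpmul2l; first by rewrite lee_fin gk_ge0.
  by apply: E_ge; exact: mem_set.
Qed.

End Fubini.

End ProductDensity.

Section PostedPriceOptimality.
Variables (R : realType) (f S : R -> R).
Hypotheses (f_ge0 : forall v, Vset v -> 0 <= f v) (measurable_f : measurable_fun Vset f)
  (integral_tail : forall w,
     (\int[@lebR R]_(v in Vset `&` `]w, +oo[) (f v)%:E = (S w)%:E)%E).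

Lemma survival_ge0 w : 0 <= S w.
Proof.
rewrite -lee_fin -integral_tail; apply: integral_ge0 => v [Vv _].
by rewrite lee_fin f_ge0.
Qed.

Let measurable_f_tail w : measurable_fun (Vset `&` `]w, +oo[) f.
Proof. by apply: (measurable_funS (@measurable_Vset R)) measurable_f => // v []. Qed.

Lemma integral_tail_scale c w : 0 <= c ->
  (\int[@lebR R]_(v in Vset) ((fun v => (c * f v)%:E) \_ `]w, +oo[) v = (c * S w)%:E)%E.
Proof.
move=> c_ge0; rewrite -integral_mkcondr EFinM -integral_tail -ge0_integralZl_EFin //.
- by apply: measurableI; [exact: measurable_Vset | exact: measurable_itv].
- by move=> v [Vv _]; rewrite lee_fin f_ge0.
- by apply/measurable_EFinP; exact: measurable_f_tail.
Qed.

Variables (Rs : R) (q P : R -> R).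
Hypotheses (S_le1 : forall w, S w <= 1)
  (posted_revenue_le : forall w, w \in Vset -> w * S w <= Rs)
  (ic : forall v w, v \in Vset -> w \in Vset -> v * q w - P w <= v * q v - P v)
  (P0_le0 : P 0 <= 0) (q0_ge0 : 0 <= q 0) (q1_le1 : q 1 <= 1)
  (measurable_P : measurable_fun Vset P).

Lemma integral_payment_le_grid n : (0 < n)%N ->
  (\int[@lebR R]_(v in Vset) (Num.max (P v) 0 * f v)%:E <= (Rs + n%:R^-1)%:E)%E.
Proof.
move=> n_gt0.
pose T (l : 'I_n) := (fun v => (step_revenue q n l * f v)%:E) \_ `]grid R n l, +oo[.
have c_ge0 (l : 'I_n) : 0 <= step_revenue q n l := step_revenue_ge0 ic n_gt0 (ltn_ord l).
have T_ge0 l v : Vset v -> (0 <= T l v)%E.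
  by move=> Vv; rewrite /T patchE; case: ifP => // _; rewrite lee_fin mulr_ge0 ?f_ge0.
have measurable_T l : measurable_fun Vset (T l).
  apply: (measurable_restrict _ (measurable_itv `]grid R n l, +oo[) (@measurable_Vset R)).1.
  apply/measurable_EFinP/measurable_funM; first exact: measurable_cst.
  exact: measurable_f_tail.
apply: (@le_trans _ _ (\int[@lebR R]_(v in Vset) \sum_(l < n) T l v)%E).
  apply: ge0_le_integral => //.
  - exact: measurable_Vset.
  - by move=> v Vv; rewrite lee_fin mulr_ge0 ?f_ge0 // le_max lexx orbT.
  - apply/measurable_EFinP/measurable_funM => //.
    by apply: measurable_maxr => //; exact: measurable_cst.
  - by apply: emeasurable_sum.
  move=> v Vv; have := payment_le_step_sum ic n_gt0 P0_le0 (mem_set Vv).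
  move=> /(ler_wpM2r (f_ge0 Vv)); rewrite -lee_fin => /le_trans; apply.
  rewrite big_mkord mulr_suml -sumEFin lee_sum // => l _.
  by rewrite /T patchE mem_setE in_itv /= andbT; case: ifP; rewrite ?mul0r.
rewrite ge0_integral_sum //; last exact: measurable_Vset.
under eq_bigr do rewrite integral_tail_scale //.
rewrite sumEFin lee_fin -(big_mkord xpredT (fun l => step_revenue q n l * S (grid R n l))).
apply: (step_sum_le ic n_gt0) => //.
- by rewrite -(mul0r (S 0)) posted_revenue_le ?Vset0.
- by move=> l _; rewrite survival_ge0 S_le1.
- by move=> l ln; apply: posted_revenue_le; rewrite grid_Vset // ltnW.
Qed.

Lemma integral_payment_le :
  (\int[@lebR R]_(v in Vset) (Num.max (P v) 0 * f v)%:E <= Rs%:E)%E.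
Proof.
apply/lee_addgt0Pr => e e_gt0.
have [m _ /(_ m (leqnn m)) me] := near_infty_natSinv_lt (PosNum e_gt0).
apply: le_trans (integral_payment_le_grid (ltn0Sn m)) _.
by rewrite lee_fin lerD2l ltW.
Qed.

End PostedPriceOptimality.

Lemma integral_le_funepos d (T : measurableType d) (R : realType)
    (mu : {measure set T -> \bar R}) (D : set T) (f : T -> \bar R) :
  (\int[mu]_(x in D) f x <= \int[mu]_(x in D) f^\+ x)%E.
Proof.
rewrite integralE; apply: le_trans (leeB (lexx _) (integral_ge0 _ _)) _.
  by move=> x _; exact: funeneg_ge0.
by rewrite sube0.
Qed.

Lemma revenue_le_pos_part (R : realType) (g p : R -> R -> R) : is_pos_density g ->
  (revenue g p <=
   \int[(@lebR R \x @lebR R)%E]_(z in TS) (Num.max (p z.1 z.2) 0 * g z.1 z.2)%:E)%E.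
Proof.
case=> _ g_gt0 _; apply: le_trans (integral_le_funepos _ _ _) _.
rewrite le_eqVlt; apply/orP; left; apply/eqP/eq_integral => -[v k] /set_mem[Vv Kk].
rewrite funeposE -EFin_max maxr_pMl ?mul0r //.
by apply/ltW/g_gt0; exact: mem_set.
Qed.

Section PostedPrice.
Variables (R : realType) (ps : R).

Lemma feasible_posted_price : feasible (f1_star ps) (f2_star ps).
Proof.
move=> v k _; rewrite in_Kset /f1_star /f2_star => /andP[k_gt0 k_le1].
by case: ifP => _; rewrite ?lexx ?ler01 ?(ltW k_gt0) ?k_le1.
Qed.

Lemma utility_posted_price v k v' k' :
  utility v k (f1_star ps v' k') (f2_star ps v' k') (p_star ps v' k') =
  if ps <= v' then v * Num.min (k' / k) 1 - ps else 0.
Proof.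
rewrite /utility /f1_star /f2_star /p_star.
by case: ifP => _; rewrite ?mul0r ?minxx ?mulr0 ?subr0.
Qed.

Lemma IR_posted_price : IR (f1_star ps) (f2_star ps) (p_star ps).
Proof.
move=> v k _ Kk; rewrite utility_posted_price //; case: ifP => // ps_le.
move: Kk; rewrite in_Kset => /andP[k_gt0 _].
by rewrite divff ?gt_eqF // minxx mulr1 subr_ge0.
Qed.

Lemma IC_posted_price : IC (f1_star ps) (f2_star ps) (p_star ps).
Proof.
move=> v k v' k' Vv Kk _ Kk'; rewrite !utility_posted_price //.
move: Vv Kk; rewrite in_Vset in_Kset => /andP[v_ge0 _] /andP[k_gt0 _].
rewrite divff ?gt_eqF // minxx mulr1.
have min_le1 : Num.min (k' / k) 1 <= 1 by rewrite ge_min lexx orbT.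
have := ler_piMr v_ge0 min_le1.
by case: (leP ps v) => ps_v; case: ifP => _; lra.
Qed.

Lemma measurable_p_star : measurable_fun TS (fun x : R * R => p_star ps x.1 x.2).
Proof.
apply: (eq_measurable_fun (fun x : R * R => ps * \1_`[ps, +oo[ x.1)).
  move=> [v k] _; rewrite /p_star indicE mem_setE in_itv /= andbT.
  by case: ifP; rewrite ?mulr1 ?mulr0.
apply/measurable_funM/measurable_funTS; first exact: measurable_cst.
apply: measurableT_comp measurable_fst.
exact: (measurable_indic (D := setT) (measurable_itv `[ps, +oo[)).
Qed.

End PostedPrice.

Section Optimality.
Variables (R : realType) (g : R -> R -> R) (ps : R).
Hypotheses (g_density : is_pos_density g)
  (g_prod : forall v k, v \in Vset -> k \in Kset -> g v k = gv g v * gk g k)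
  (ps_V : ps \in Vset)
  (ps_opt : forall q, q \in Vset -> q * (1 - Gv g q) <= ps * (1 - Gv g ps)).

Let Rs := ps * (1 - Gv g ps).

Let ps_ge0 : 0 <= ps.
Proof. by move: ps_V; rewrite in_Vset => /andP[]. Qed.

Let Rs_ge0 : 0 <= Rs.
Proof. by have := ps_opt (Vset0 R); rewrite mul0r. Qed.

Lemma expect_payment_le (f1 f2 p : R -> R -> R) (k : R) :
  feasible f1 f2 -> IC f1 f2 p -> IR f1 f2 p ->
  measurable_fun TS (fun x : R * R => p x.1 x.2) -> k \in Kset ->
  (expect_given_k g (fun v k => Num.max (p v k) 0%R) k <= Rs%:E)%E.
Proof.
move=> feas ic ir mp Kk.
have k_gt0 : 0 < k by move: Kk; rewrite in_Kset => /andP[].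
pose q v := Num.min (f1 v k / k) (f2 v k).
have q01 v : v \in Vset -> 0 <= q v <= 1.
  move=> Vv; have [/andP[a1_ge0 _] /andP[a2_ge0 a2_le1]] := feas v k Vv Kk.
  by rewrite le_min ge_min a2_le1 orbT a2_ge0 divr_ge0 // ltW.
apply: (@integral_payment_le _ (gv g) (fun w => 1 - Gv g w) (gv_ge0 g_density)
  (measurable_gv g_density g_prod) (integral_tail_gv g_density g_prod) Rs q).
- by move=> w; rewrite lerBlDr lerDl; apply: Rintegral_ge0 => v [Vv _]; exact: gv_ge0.
- exact: ps_opt.
- by move=> v w Vv Vw; exact: ic.
- by have := ir 0 k (Vset0 R) Kk; rewrite /utility mul0r sub0r oppr_ge0.
- by case/andP: (q01 0 (Vset0 R)).
- by case/andP: (q01 1 (Vset1 R)).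
- exact: (measurable_fun_TS_slice mp Kk).
Qed.

Lemma expect_posted_price_ge k : k \in Kset ->
  (Rs%:E <= expect_given_k g (p_star ps) k)%E.
Proof.
move=> Kk; rewrite -(integral_tail_scale (gv_ge0 g_density) (measurable_gv g_density g_prod)
  (integral_tail_gv g_density g_prod) _ ps_ge0).
apply: ge0_le_integral.
- exact: measurable_Vset.
- move=> v Vv; rewrite patchE; case: ifP => // _.
  by rewrite lee_fin mulr_ge0 ?gv_ge0.
- apply: (measurable_restrict _ (measurable_itv `]ps, +oo[) (@measurable_Vset R)).1.
  apply/measurable_EFinP/measurable_funM; first exact: measurable_cst.
  apply: measurable_funS (measurable_gv g_density g_prod).
  - exact: measurable_Vset.
  - exact: subIsetl.
- apply/measurable_EFinP/measurable_funM; last exact: measurable_gv.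
  exact: (measurable_fun_TS_slice (measurable_p_star ps) Kk).
- move=> v Vv; rewrite patchE mem_setE in_itv /= andbT /p_star.
  case: ifP => [/ltW -> //|_]; case: ifP => _; rewrite lee_fin mulr_ge0 ?gv_ge0 //.
Qed.

Lemma revenue_le_posted_price (f1 f2 p : R -> R -> R) :
  feasible f1 f2 -> IC f1 f2 p -> IR f1 f2 p ->
  measurable_fun TS (fun x : R * R => p x.1 x.2) -> (revenue g p <= Rs%:E)%E.
Proof.
move=> feas ic ir mp; apply: le_trans (revenue_le_pos_part p g_density) _.
apply: (integral_TS_le g_density g_prod (h := fun v k => Num.max (p v k) 0)) => //.
- by apply: measurable_maxr => //; exact: measurable_cst.
- by move=> v k _ _; rewrite le_max lexx orbT.
- by move=> k Kk; exact: expect_payment_le feas ic ir mp Kk.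
Qed.

Lemma posted_price_revenue_ge : (Rs%:E <= revenue g (p_star ps))%E.
Proof.
apply: (integral_TS_ge g_density g_prod (measurable_p_star ps)) => //.
- by move=> v k _ _; rewrite /p_star; case: ifP.
- exact: expect_posted_price_ge.
Qed.

End Optimality.

Theorem proposition4 (R : realType) (g : R -> R -> R) (ps : R) :
  is_pos_density g ->
  (forall v k, v \in Vset -> k \in Kset -> g v k = gv g v * gk g k) ->
  ps \in Vset ->
  (forall q, q \in Vset -> q * (1 - Gv g q) <= ps * (1 - Gv g ps)) ->
  [/\ feasible (f1_star ps) (f2_star ps),
      IC (f1_star ps) (f2_star ps) (p_star ps),
      IR (f1_star ps) (f2_star ps) (p_star ps) &
      forall f1 f2 p : R -> R -> R,
        feasible f1 f2 -> IC f1 f2 p -> IR f1 f2 p ->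
        measurable_fun TS (fun x : R * R => p x.1 x.2) ->
        (revenue g p <= revenue g (p_star ps))%E].
Proof.
move=> g_density g_prod ps_V ps_opt; split.
- exact: feasible_posted_price.
- exact: IC_posted_price.
- exact: IR_posted_price.
move=> f1 f2 p feas ic ir mp.
apply: le_trans (revenue_le_posted_price g_density g_prod ps_opt feas ic ir mp) _.
exact: posted_price_revenue_ge.
Qed.
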